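(* Let $C\subseteq\mathbb{R}^{n+1}$ be an open cone with base-point $b\in C$, let $z\in\partial C$, $y\in C$, and $\gamma(t)=(1-t)z+ty$ for $t\in(0,1]$. Then for each $x\in C$, \[\lim_{t\to0}\big(d_C(x,\gamma(t))-d_C(b,\gamma(t))\big)=\mathcal{RF}_C(x,z)-\mathcal{RF}_C(b,z)+\mathcal F_{\tau(C,z)}(x,y)-\mathcal F_{\tau(C,z)}(b,y).\]
   Context: An open cone is a nonempty open convex set $C$ with $\lambda C\subseteq C$ for $\lambda>0$. For an open cone $K$, $x\in K$ and $y\in\mathbb{R}^{n+1}$, $M(y/x;K)=\inf\{\lambda>0\colon\lambda x-y\in\overline K\}$. Funk metric: $\mathcal F_K(x,y)=\log M(x/y;K)$ ($y\in K$); reverse-Funk metric: $\mathcal{RF}_K(x,y)=\log M(y/x;K)$ ($x\in K$); Hilbert's projective metric: $d_K(x,y)=\mathcal F_K(x,y)+\mathcal{RF}_K(x,y)$ for $x,y\in K$. The open tangent cone at $z\in\partial C$ is $\tau(C,z)=\{\lambda(w-z)\colon\lambda>0,w\in C\}$. *)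

From HB Require Import structures.
From mathcomp Require Import all_boot all_order all_algebra.
From mathcomp Require Import all_classical all_reals all_analysis.
Set Implicit Arguments. Unset Strict Implicit. Unset Printing Implicit Defensive.
Import Order.TTheory GRing.Theory Num.Theory.
Import numFieldNormedType.Exports.
Local Open Scope classical_set_scope.
Local Open Scope ring_scope.

Section Defs.
Variables (R : realType) (n : nat).
Local Notation V := 'rV[R]_n.+1.

Definition open_cone (C : set V) : Prop :=
  [/\ C !=set0, open C,
      (forall x y (t : R), C x -> C y -> 0 <= t -> t <= 1 ->
          C ((1 - t) *: x + t *: y))
    & (forall (l : R) x, 0 < l -> C x -> C (l *: x))].

Definition bdry (C : set V) : set V := closure C `\` interior C.

(* Mgauge K x y = M(y/x;K) = inf { l > 0 : l x - y \in closure K } *)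
Definition Mgauge (K : set V) (x y : V) : R :=
  inf [set l : R | 0 < l /\ closure K (l *: x - y)].

Definition funk (K : set V) (x y : V) : R := ln (Mgauge K y x).
Definition rfunk (K : set V) (x y : V) : R := ln (Mgauge K x y).
Definition hilbert (K : set V) (x y : V) : R := funk K x y + rfunk K x y.

Definition tangent_cone (C : set V) (z : V) : set V :=
  [set v | exists (l : R) (w : V), [/\ 0 < l, C w & v = l *: (w - z)]].
End Defs.

(* Write g(t) = (1 - t) z + t y.  The reverse-Funk gauge M(g(t)/x; C) is subadditive and
   positively subhomogeneous in g(t), hence tends to M(z/x; C) as t -> 0.  The Funk gauge
   M(x/g(t); C) blows up like 1/t: a witness l for it gives l g(t) - x = l t y - x
   + l (1 - t) z, and positive multiples of z are exactly what may be added in the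
   tangent cone tau(C, z); conversely an element of closure tau(C, z) becomes an element
   of C after adding a large multiple of z.  Hence t M(x/g(t); C) -> M(x/y; tau(C, z)),
   which is positive because z is not in C, so that -x is not in closure tau(C, z).  The
   factor t cancels in the difference of the logarithms taken at x and at b. *)
From HB Require Import structures.
From mathcomp Require Import all_boot all_order all_algebra.
From mathcomp Require Import all_classical all_reals all_analysis.
From mathcomp Require Import ring lra.

Set Implicit Arguments.
Unset Strict Implicit.
Import Order.TTheory GRing.Theory Num.Theory.
Import numFieldNormedType.Exports.
Local Open Scope classical_set_scope.
Local Open Scope ring_scope.

Lemma ler_dist_sandwich (R : realDomainType) (a b u w : R) :
  a <= b + u -> b <= a + w -> 0 <= u -> 0 <= w -> `|a - b| <= u + w.
Proof. by move=> ab ba u0 w0; rewrite ler_norml; apply/andP; split; lra. Qed.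

Section OpenCone.
Variables (R : realType) (n : nat).
Local Notation V := 'rV[R]_n.+1.

Lemma closure_normP (A : set V) p :
  closure A p <-> forall e : R, 0 < e -> exists2 c, A c & `|p - c| < e.
Proof.
split.
- move=> clp e e0; have [c [Ac pc]] := clp (ball p e) (nbhsx_ballx p e e0).
  by exists c => //; move: pc; rewrite -ball_normE.
- move=> clp B /nbhs_ballP [e /= e0 sB]; have [c Ac pc] := clp e e0.
  by exists c; split=> //; apply: sB; rewrite -ball_normE.
Qed.

Lemma Mgauge_lbound (K : set V) x v :
  has_lbound [set l : R | 0 < l /\ closure K (l *: x - v)].
Proof. by exists 0 => l [l0 _]; apply: ltW. Qed.

Lemma Mgauge_le (K : set V) x v l :
  0 < l -> closure K (l *: x - v) -> Mgauge K x v <= l.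
Proof. by move=> l0 Kl; apply: ge_inf => //; apply: Mgauge_lbound. Qed.

Variable C : set V.
Hypothesis coneC : open_cone C.

Lemma open_cone_ball x :
  C x -> exists2 r : R, 0 < r & forall w, `|x - w| < r -> C w.
Proof.
case: coneC => _ + _ _ Cx; rewrite openE => /(_ x Cx) /nbhs_ballP[r r0 sB].
by exists r => // w xw; apply: sB; rewrite -ball_normE.
Qed.

Lemma open_coneZ l a : 0 < l -> C a -> C (l *: a).
Proof. by case: coneC => _ _ _; apply. Qed.

Lemma open_coneD a b : C a -> C b -> C (a + b).
Proof.
case: coneC => _ _ convC _ Ca Cb.
have half : (1 - 2^-1 : R) = 2^-1 by field.
have := convC a b 2^-1 Ca Cb; rewrite half invr_ge0 invf_le1 ?ler1n //.
move=> /(_ (ler0n _ 2) isT) /(open_coneZ (ltr0Sn _ 1)).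
by rewrite -scalerDr scalerA mulfV ?scale1r.
Qed.

Lemma closure_open_coneD a b : closure C a -> C b -> C (a + b).
Proof.
move=> /closure_normP cla Cb; have [r r0 ballC] := open_cone_ball Cb.
have [c Cc ac] := cla r r0.
have -> : a + b = c + (b + (a - c)) by rewrite addrCA subrKC addrC.
by apply: open_coneD => //; apply: ballC; rewrite opprD addNKr normrN.
Qed.

Lemma closure_coneD a b : closure C a -> closure C b -> closure C (a + b).
Proof.
move=> cla /closure_normP clb; apply/closure_normP => e e0.
have [c Cc bc] := clb e e0.
by exists (a + c); [exact: closure_open_coneD | rewrite opprD addrACA subrr add0r].
Qed.

Lemma closure_cone0 : closure C 0.
Proof.
case: coneC => [[c Cc]] _ _ _; apply/closure_normP => e e0.
have c1 : 0 < `|c| + 1 by rewrite ltr_pwDr.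
exists ((e / (`|c| + 1)) *: c); first by apply: open_coneZ; rewrite ?divr_gt0.
rewrite sub0r normrN normrZ gtr0_norm ?divr_gt0 // mulrAC ltr_pdivrMr //.
by rewrite ltr_pM2l // ltrDl.
Qed.

Lemma closure_coneZ l a : 0 <= l -> closure C a -> closure C (l *: a).
Proof.
rewrite le_eqVlt => /orP[/eqP<- _|l0]; first by rewrite scale0r; exact: closure_cone0.
move=> /closure_normP cla; apply/closure_normP => e e0.
have [c Cc ac] := cla (e / l) (divr_gt0 e0 l0).
exists (l *: c); first exact: open_coneZ.
by rewrite -scalerBr normrZ gtr0_norm // mulrC -ltr_pdivlMr.
Qed.

Lemma segment_in_open_cone z y t :
  closure C z -> C y -> 0 < t -> t <= 1 -> C ((1 - t) *: z + t *: y).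
Proof.
move=> clz Cy t0 t1; apply: closure_open_coneD; last exact: open_coneZ.
by apply: closure_coneZ; rewrite ?subr_ge0.
Qed.

Lemma Mgauge_set_witness x v : C x -> exists2 l : R, 0 < l & closure C (l *: x - v).
Proof.
move=> Cx; have [r r0 ballC] := open_cone_ball Cx.
have v1 : 0 < `|v| + 1 by rewrite ltr_pwDr.
set l := (`|v| + 1) / r; have l0 : 0 < l by rewrite divr_gt0.
exists l => //; apply: subset_closure.
have -> : l *: x - v = l *: (x - l^-1 *: v).
  by rewrite scalerBr scalerA mulfV ?gt_eqF // scale1r.
apply: open_coneZ => //; apply: ballC.
rewrite opprB subrKC normrZ gtr0_norm ?invr_gt0 // /l invf_div mulrAC.
by rewrite ltr_pdivrMr // ltr_pM2l // ltrDl.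
Qed.

Lemma has_inf_Mgauge_set x v :
  C x -> has_inf [set l : R | 0 < l /\ closure C (l *: x - v)].
Proof.
move=> Cx; split; last exact: Mgauge_lbound.
by have [l l0 Cl] := Mgauge_set_witness v Cx; exists l.
Qed.

Lemma Mgauge_ge0 x v : C x -> 0 <= Mgauge C x v.
Proof.
move=> Cx; apply: lb_le_inf; first by case: (has_inf_Mgauge_set v Cx).
by move=> l [l0 _]; apply: ltW.
Qed.

Lemma Mgauge_approx x v e : C x -> 0 < e ->
  exists2 l, 0 < l /\ closure C (l *: x - v) & l < Mgauge C x v + e.
Proof. by move=> Cx e0; apply: inf_adherent => //; apply: has_inf_Mgauge_set. Qed.

Lemma MgaugeD_le x a b : C x -> Mgauge C x (a + b) <= Mgauge C x a + Mgauge C x b.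
Proof.
move=> Cx; apply/ler_addgt0Pr => e e0.
have e2 : 0 < e / 2 by rewrite divr_gt0.
have [la [la0 Cla] lae] := Mgauge_approx a Cx e2.
have [lb [lb0 Clb] lbe] := Mgauge_approx b Cx e2.
apply: (le_trans (Mgauge_le (addr_gt0 la0 lb0) _)).
  by rewrite scalerDl opprD addrACA; apply: closure_coneD.
by rewrite [e]splitr addrACA; exact: ltW (ltrD lae lbe).
Qed.

Lemma MgaugeZ_le x w t : C x -> 0 < t -> Mgauge C x (t *: w) <= t * Mgauge C x w.
Proof.
move=> Cx t0; apply/ler_addgt0Pr => e e0.
have [l [l0 Cl] le] := Mgauge_approx w Cx (divr_gt0 e0 t0).
apply: (le_trans (Mgauge_le (mulr_gt0 t0 l0) _)).
  by rewrite -scalerA -scalerBr; apply: closure_coneZ => //; apply: ltW.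
move: le; rewrite -(ltr_pM2l t0) mulrDr mulrCA mulfV ?gt_eqF // mulr1.
exact: ltW.
Qed.

Lemma Mgauge_cvg_segment x z y : C x ->
  (fun t => Mgauge C x ((1 - t) *: z + t *: y)) @ 0^'+ --> Mgauge C x z.
Proof.
move=> Cx; set A := Mgauge C x (y - z); set B := Mgauge C x (z - y).
have A0 : 0 <= A := Mgauge_ge0 _ Cx; have B0 : 0 <= B := Mgauge_ge0 _ Cx.
have K0 : 0 < A + B + 1 := ltr_wpDl (addr_ge0 A0 B0) ltr01.
apply/cvgrPdist_le => e e0; near=> t.
have t0 : 0 < t by near: t; exact: nbhs_right_gt.
have te : t * (A + B + 1) < e.
  by rewrite -ltr_pdivlMr //; near: t; apply: nbhs_right_lt; apply: divr_gt0.
have -> : (1 - t) *: z + t *: y = z + t *: (y - z).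
  by rewrite scalerBl scale1r scalerBr addrAC -addrA.
have up : Mgauge C x (z + t *: (y - z)) <= Mgauge C x z + t * A.
  by apply: (le_trans (MgaugeD_le _ _ Cx)); rewrite lerD2l; exact: MgaugeZ_le.
have down : Mgauge C x z <= Mgauge C x (z + t *: (y - z)) + t * B.
  have {1}-> : z = (z + t *: (y - z)) + t *: (z - y).
    by rewrite -addrA -scalerDr addrC subrKA subrr scaler0 add0r.
  by apply: (le_trans (MgaugeD_le _ _ Cx)); rewrite lerD2l; exact: MgaugeZ_le.
clearbody A B; have tA : 0 <= t * A := mulr_ge0 (ltW t0) A0.
have tB : 0 <= t * B := mulr_ge0 (ltW t0) B0.
apply: (le_trans (ler_dist_sandwich down up tB tA)); apply: ltW; apply: le_lt_trans te.
by rewrite addrC -mulrDr (ler_pM2l t0) lerDl; exact: ler01.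
Unshelve. all: by end_near.
Qed.

Lemma segment_scale_sub (l t : R) (z y x : V) :
  l *: ((1 - t) *: z + t *: y) - x = (l * t) *: y - x + (l * (1 - t)) *: z.
Proof. by rewrite scalerDr !scalerA -addrA addrC. Qed.

Section TangentCone.
Variable z : V.
Local Notation T := (tangent_cone C z).

Lemma tangent_cone_closure_shift u K :
  0 < K -> closure C (u + K *: z) -> closure T u.
Proof.
move=> K0 /closure_normP clu; apply/closure_normP => e e0.
have [c Cc uc] := clu e e0.
exists (c - K *: z); last by rewrite opprB addrA.
exists K, (K^-1 *: c); split; first exact: K0.
  by apply: open_coneZ; rewrite ?invr_gt0.
by rewrite scalerBr scalerA mulfV ?gt_eqF // scale1r.
Qed.

Lemma closure_tangent_coneD_shift a c :
  closure T a -> C c -> exists2 K : R, 0 < K & C (a + c + K *: z).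
Proof.
move=> /closure_normP cla Cc; have [r r0 ballC] := open_cone_ball Cc.
have [_ [l [w [l0 Cw ->]]] al] := cla r r0.
exists l => //.
have -> : a + c + l *: z = l *: w + (c + (a - l *: (w - z))).
  by rewrite scalerBr opprB addrCA [l *: w + _]addrCA subrKC -addrA addrCA.
apply: open_coneD; first exact: open_coneZ.
by apply: ballC; rewrite opprD addNKr normrN.
Qed.

Lemma tangent_cone_opp_notin x : ~ C z -> C x -> ~ closure T (- x).
Proof.
move=> zNC Cx /closure_normP clx; have [r r0 ballC] := open_cone_ball Cx.
have [_ [l [w [l0 Cw ->]]] xl] := clx r r0.
apply: zNC; have -> : z = l^-1 *: (- (l *: (w - z))) + w.
  by rewrite scalerN scalerA mulVf ?gt_eqF // scale1r opprB subrK.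
apply: open_coneD => //; apply: open_coneZ; first by rewrite invr_gt0.
by apply: ballC; rewrite opprK -normrN opprD.
Qed.

Hypothesis clz : closure C z.

Lemma closure_cone_shift_mono u K0 K :
  C (u + K0 *: z) -> K0 <= K -> closure C (u + K *: z).
Proof.
move=> CK0 K0K; have -> : u + K *: z = (u + K0 *: z) + (K - K0) *: z.
  by rewrite -addrA -scalerDl subrKC.
apply: closure_coneD; first exact: subset_closure.
by apply: closure_coneZ; rewrite ?subr_ge0.
Qed.

Lemma open_cone_sub_tangent_cone : C `<=` T.
Proof.
move=> c Cc; exists 1, (c + z); split; first exact: ltr01.
- by rewrite addrC; apply: closure_open_coneD.
- by rewrite addrK scale1r.
Qed.

Variable y : V.
Hypotheses (zNC : ~ C z) (Cy : C y).
Local Notation gam t := ((1 - t) *: z + t *: y).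

Lemma has_inf_tangent_Mgauge_set x :
  has_inf [set s : R | 0 < s /\ closure T (s *: y - x)].
Proof.
split; last exact: Mgauge_lbound.
have [l l0 Cl] := Mgauge_set_witness x Cy.
by exists l; split=> //; apply: closureS _ Cl; exact: open_cone_sub_tangent_cone.
Qed.

Lemma closure_tangent_cone_rescale x t l : 0 < t < 1 -> 0 < l ->
  closure C (l *: gam t - x) -> closure T ((l * t) *: y - x).
Proof.
move=> /andP[t0 t1] l0; rewrite segment_scale_sub; apply: tangent_cone_closure_shift.
by rewrite mulr_gt0 // subr_gt0.
Qed.

Lemma tangent_Mgauge_le x t :
  0 < t < 1 -> Mgauge T y x <= t * Mgauge C (gam t) x.
Proof.
move=> /[dup] t01 /andP[t0 t1].
have Cg : C (gam t) := segment_in_open_cone clz Cy t0 (ltW t1).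
rewrite mulrC -(ler_pdivrMr _ _ t0); apply: lb_le_inf.
  by have [l l0 Cl] := Mgauge_set_witness x Cg; exists l.
move=> l [l0 Cl]; rewrite (ler_pdivrMr _ _ t0).
by apply: Mgauge_le; [exact: mulr_gt0 | exact: closure_tangent_cone_rescale].
Qed.

Lemma tangent_Mgauge_gt0 x : C x -> 0 < Mgauge T y x.
Proof.
move=> Cx; have hinf := has_inf_tangent_Mgauge_set x.
have L0 : 0 <= Mgauge T y x.
  by apply: lb_le_inf; [case: hinf | move=> s [s0 _]; exact: ltW].
rewrite lt_neqAle L0 andbT; apply/eqP => L0e.
apply: (tangent_cone_opp_notin zNC Cx); apply/closure_normP => e e0.
have e2 : 0 < e / 2 by rewrite divr_gt0.
have y1 : 0 < `|y| + 1 by rewrite ltr_pwDr.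
(* M(x/y; T) = 0 puts s y - x in closure T for arbitrarily small s > 0, hence -x too *)
have [s [s0 Ts]] := inf_adherent (divr_gt0 e2 y1) hinf.
rewrite -/(Mgauge T y x) -L0e add0r ltr_pdivlMr // => sy.
have [c Tc xc] := (closure_normP _ _).1 Ts (e / 2) e2.
exists c => //; have -> : - x - c = (s *: y - x - c) - s *: y.
  by rewrite [RHS]addrAC [s *: y - x]addrC addrK.
apply: (le_lt_trans (ler_normB _ _)); rewrite [e]splitr ltrD //.
rewrite normrZ gtr0_norm //; apply: le_lt_trans sy.
by rewrite ler_pM2l // lerDl.
Qed.

Lemma tangent_Mgauge_cvg x : C x ->
  (fun t => t * Mgauge C (gam t) x) @ 0^'+ --> Mgauge T y x.
Proof.
move=> Cx; apply/cvgrPdist_le => e e0.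
have e2 : 0 < e / 2 by rewrite divr_gt0.
have [s [s0 Ts] sL] := inf_adherent e2 (has_inf_tangent_Mgauge_set x).
have [K K0 CK] := closure_tangent_coneD_shift Ts (open_coneZ e2 Cy).
set s' := s + e / 2; have s'0 : 0 < s' := addr_gt0 s0 e2.
have CK' : C (s' *: y - x + K *: z) by rewrite /s' scalerDl (addrAC (s *: y)).
have s'L : s' <= Mgauge T y x + e.
  by rewrite /s' {2}(splitr e) addrA lerD2r; exact: ltW.
clearbody s'; near=> t.
have t0 : 0 < t by near: t; exact: nbhs_right_gt.
have t1 : t < 1 by near: t; exact: nbhs_right_lt ltr01.
have tK : t * (s' + K) < s'.
  rewrite -ltr_pdivlMr; last exact: addr_gt0.
  by near: t; apply: nbhs_right_lt; apply: divr_gt0 => //; exact: addr_gt0.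
have t01 : 0 < t < 1 by rewrite t0 t1.
rewrite distrC ger0_norm; last by rewrite subr_ge0; exact: tangent_Mgauge_le.
rewrite lerBlDl; apply: le_trans s'L.
(* s' / t is a witness for M(x/gam t; C) once the coefficient of z exceeds K *)
have M_le : Mgauge C (gam t) x <= s' / t.
  apply: Mgauge_le; first exact: divr_gt0.
  rewrite segment_scale_sub (divfK (lt0r_neq0 t0)).
  apply: (closure_cone_shift_mono CK').
  rewrite mulrAC (ler_pdivlMr _ _ t0) mulrBr mulr1 lerBrDr.
  have -> : K * t + s' * t = t * (s' + K) by ring.
  exact: ltW.
by apply: (le_trans (ler_wpM2l (ltW t0) M_le)); rewrite mulrC (divfK (lt0r_neq0 t0)).
Unshelve. all: by end_near.
Qed.

End TangentCone.
End OpenCone.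

Theorem lemma4p1 (R : realType) (n : nat) (C : set 'rV[R]_n.+1)
    (b z y : 'rV[R]_n.+1) :
  open_cone C -> C b -> bdry C z -> C y ->
  forall x : 'rV[R]_n.+1, C x ->
  (* the right-hand side is well defined (log of a positive number) *)
  0 < Mgauge C x z -> 0 < Mgauge C b z ->
  (fun t : R => hilbert C x ((1 - t) *: z + t *: y)
                - hilbert C b ((1 - t) *: z + t *: y))
    @ 0^'+ -->
  (rfunk C x z - rfunk C b z
   + funk (tangent_cone C z) x y - funk (tangent_cone C z) b y).
Proof.
move=> coneC Cb [clz zNint] Cy x Cx Mxz Mbz.
have zNC : ~ C z.
  by move=> Cz; apply: zNint; case: coneC => _ + _ _; rewrite openE => /(_ z Cz).
have cvg_rfunk u : C u -> 0 < Mgauge C u z ->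
    (fun t => ln (Mgauge C u ((1 - t) *: z + t *: y))) @ 0^'+ --> rfunk C u z.
  move=> Cu Muz; apply: continuous_cvg (continuous_ln Muz) _.
  exact: (Mgauge_cvg_segment coneC y Cu).
have cvg_funk u : C u ->
    (fun t => ln (t * Mgauge C ((1 - t) *: z + t *: y) u)) @ 0^'+ -->
    funk (tangent_cone C z) u y.
  move=> Cu; apply: continuous_cvg (continuous_ln _) _.
    exact: (tangent_Mgauge_gt0 coneC clz zNC Cy Cu).
  exact: (tangent_Mgauge_cvg coneC clz Cy Cu).
apply: cvg_trans (cvgB (cvgD (cvgB (cvg_rfunk _ Cx Mxz) (cvg_rfunk _ Cb Mbz))
  (cvg_funk _ Cx)) (cvg_funk _ Cb)).
apply: near_eq_cvg; near=> t.
have t0 : 0 < t by near: t; exact: nbhs_right_gt.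
have t1 : t < 1 by near: t; exact: nbhs_right_lt ltr01.
have t01 : 0 < t < 1 by rewrite t0 t1.
have ln_cancel (a a' c c' : R) : 0 < c -> 0 < c' ->
    a - a' + ln (t * c) - ln (t * c') = ln c + a - (ln c' + a').
  by move=> c0 c'0; rewrite !lnM ?posrE //; ring.
have M_gt0 u : C u -> 0 < Mgauge C ((1 - t) *: z + t *: y) u.
  move=> Cu; rewrite -(pmulr_rgt0 _ t0).
  have L_gt0 := tangent_Mgauge_gt0 coneC clz zNC Cy Cu.
  exact: lt_le_trans L_gt0 (tangent_Mgauge_le coneC clz Cy u t01).
by rewrite /hilbert /funk /rfunk !fctE /=; apply: ln_cancel; apply: M_gt0.
Unshelve. all: by end_near.
Qed.
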